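(* Let $n \geq 2$ and let $x_1, \dots, x_n$ be real numbers with mean $\mu = \frac{1}{n}\sum_{i=1}^n x_i > 0$ and variance $\sigma^2 = \frac{1}{n}\sum_{i=1}^n (x_i-\mu)^2$, where $\sigma \ge 0$. (a) If $0 \leq \sigma/\mu < 1/\sqrt{n-1}$, then each $x_i$ is positive and $$\left(\mu - \sigma\sqrt{n-1}\right)\left(\mu + \frac{\sigma}{\sqrt{n-1}}\right)^{n-1} \;\leq\; x_1 x_2 \cdots x_n \;\leq\; \left(\mu + \sigma\sqrt{n-1}\right)\left(\mu - \frac{\sigma}{\sqrt{n-1}}\right)^{n-1}.$$ Both bounds are sharp: for every $\mu>0$ and $\sigma$ with $0 \le \sigma/\mu < 1/\sqrt{n-1}$, each bound is attained by some sequence of $n$ real numbers with mean $\mu$ and variance $\sigma^2$. (b) If every $x_i$ is positive, then $0 \leq \sigma/\mu < \sqrt{n-1}$ and the two inequalities displayed in (a) still hold. The upper bound is sharp: for every $\mu>0$ and $\sigma$ with $0\le \sigma/\mu<\sqrt{n-1}$ it is attained by some positive sequence with mean $\mu$ and variance $\sigma^2$. For $1/\sqrt{n-1} < \sigma/\mu < \sqrt{n-1}$ the lower bound expression $(\mu - \sigma\sqrt{n-1})(\mu + \sigma/\sqrt{n-1})^{n-1}$ is negative; replacing the lower bound by $\max\left\{0, (\mu - \sigma\sqrt{n-1})(\mu + \sigma/\sqrt{n-1})^{n-1}\right\}$, the lower inequality is best possible on the entire range $0 \le \sigma/\mu < \sqrt{n-1}$, i.e. this quantity equals the infimum of $x_1\cdots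 x_n$ over all positive sequences of length $n$ with mean $\mu$ and variance $\sigma^2$.
   Context: Mean and variance are the population mean and variance: $\mu = \frac1n\sum x_i$, $\sigma^2 = \frac1n \sum (x_i-\mu)^2$, with $\sigma$ the nonnegative square root. *)

From HB Require Import structures.
From mathcomp Require Import all_boot all_order all_algebra.
From mathcomp Require Import reals.
Set Implicit Arguments. Unset Strict Implicit. Unset Printing Implicit Defensive.
Import Order.TTheory GRing.Theory Num.Theory.
Local Open Scope ring_scope.

Section Defs.
Variables (R : realType) (n : nat).

Definition mean (x : 'I_n -> R) : R := (\sum_(i < n) x i) / n%:R.

Definition variance (x : 'I_n -> R) : R :=
  (\sum_(i < n) (x i - mean x) ^+ 2) / n%:R.

Definition stddev (x : 'I_n -> R) : R := Num.sqrt (variance x).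

Definition prodx (x : 'I_n -> R) : R := \prod_(i < n) x i.

Definition lower_bd (mu s : R) : R :=
  (mu - s * Num.sqrt (n.-1)%:R) * (mu + s / Num.sqrt (n.-1)%:R) ^+ n.-1.

Definition upper_bd (mu s : R) : R :=
  (mu + s * Num.sqrt (n.-1)%:R) * (mu - s / Num.sqrt (n.-1)%:R) ^+ n.-1.

End Defs.

From HB Require Import structures.
From mathcomp Require Import all_boot all_order all_algebra.
From mathcomp Require Import reals functions normedtype derive exp.
From mathcomp Require Import lra ring.
Set Implicit Arguments. Unset Strict Implicit.
Import Order.TTheory GRing.Theory Num.Theory.
Import numFieldNormedType.Exports.
Local Open Scope ring_scope.

(* Every x_i lies in [mu - sigma r, mu + sigma r], r = sqrt (n - 1). Put
   p = mu - sigma / r and q = mu + sigma r, and let [ln_interp p q] be the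
   quadratic tangent to ln at p and equal to ln at q; it dominates ln on (0, q].
   Hence sum_i ln x_i <= sum_i ln_interp p q x_i.  The sum of a quadratic over a
   sequence depends only on its mean and variance, so the right-hand side is the
   same sum over (q, p, ..., p), a sequence with mean mu and variance sigma^2 on
   which ln and ln_interp p q agree: this is the upper bound and its sharpness.
   The lower bound is the mirror argument with the tangent at mu + sigma / r.
   When mu <= sigma r, positive sequences (delta, u, w, ..., w) with the
   prescribed moments exist for every small delta > 0, so the infimum is 0. *)

Section LnInterpolation.
Variable R : realType.
Implicit Types (f df : R -> R) (a b p q t u v : R).

Lemma ger0_is_derive_le f df a b : a <= b ->
  (forall t, a <= t <= b -> is_derive t 1 f (df t)) ->
  (forall t, a <= t <= b -> 0 <= df t) -> f a <= f b.
Proof.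
move=> ab f_df df_ge0; rewrite -subr_ge0.
have [c + ->] : exists2 c, c \in `[a, b]%R & f b - f a = df c * (b - a).
  apply: MVT_segment => // [t|].
    by rewrite in_itv /= => /andP[a_t t_b]; apply: f_df; rewrite !ltW.
  apply: derivable_within_continuous => t; rewrite in_itv /= => abt.
  by apply: ex_derive; exact: f_df.
by rewrite in_itv /= => abc; rewrite mulr_ge0 ?subr_ge0 ?df_ge0.
Qed.

Lemma ler0_is_derive_ge f df a b : a <= b ->
  (forall t, a <= t <= b -> is_derive t 1 f (df t)) ->
  (forall t, a <= t <= b -> df t <= 0) -> f b <= f a.
Proof.
move=> ab f_df df_le0; rewrite -lerN2.
have := @ger0_is_derive_le (- f) (- df) a b ab; rewrite !opprfctE; apply => t abt.
  exact: is_deriveN (f_df t abt).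
by rewrite oppr_ge0 df_le0.
Qed.

Definition ln_taylor2 p t := ln p + p^-1 * (t - p) - (t - p) ^+ 2 / (2 * p ^+ 2).

Lemma ln_sub_taylor2_sign p t : 0 < p -> 0 < t ->
  0 <= (t - p) * (ln t - ln_taylor2 p t).
Proof.
move=> p0 t0; pose D u := ln u - ln_taylor2 p u.
have D_p : D p = 0 by rewrite /D /ln_taylor2; ring.
have D_le a b : 0 < a -> a <= b -> D a <= D b.
  move=> a0 ab.
  apply: (@ger0_is_derive_le D (fun u => (u - p) ^+ 2 / (u * p ^+ 2)) a b ab)
    => u /andP[au _]; have u0 : 0 < u := lt_le_trans a0 au.
    have := is_derive1_ln u0; rewrite /D /ln_taylor2 => ln_df.
    apply: is_derive_eq; rewrite -![_ *: _]/(_ * _); field; by rewrite !gt_eqF.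
  by apply: divr_ge0; rewrite ?sqr_ge0 // mulr_ge0 ?sqr_ge0 ?(ltW u0).
have [tp|pt] := lerP t p.
  by apply: mulr_le0; [rewrite subr_le0 | rewrite -/(D t) -D_p D_le].
by apply: mulr_ge0; [rewrite subr_ge0 ltW | rewrite -/(D t) -D_p D_le // ltW].
Qed.

Definition ln_interp_coef p q := (ln q - ln p - p^-1 * (q - p)) / (q - p) ^+ 2.

Definition ln_interp p q t :=
  ln p + p^-1 * (t - p) + ln_interp_coef p q * (t - p) ^+ 2.

Lemma ln_interp_left p q : ln_interp p q p = ln p.
Proof. by rewrite /ln_interp subrr expr0n /= !mulr0 !addr0. Qed.

Lemma ln_interp_right p q : ln_interp p q q = ln q.
Proof.
have [->|pq] := eqVneq p q; first exact: ln_interp_left.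
rewrite /ln_interp /ln_interp_coef divfK; first ring.
by rewrite sqrf_eq0 subr_eq0 eq_sym.
Qed.

Section LnInterpolationBounds.
Variables p q : R.
Hypotheses (p_gt0 : 0 < p) (q_gt0 : 0 < q).

Let D u := ln_interp p q u - ln u.
Let slope u := (p * u)^-1 + 2 * ln_interp_coef p q.
Let dD u := (u - p) * slope u.

Let D_p : D p = 0. Proof. by rewrite /D ln_interp_left subrr. Qed.
Let D_q : D q = 0. Proof. by rewrite /D ln_interp_right subrr. Qed.

Let D_df u : 0 < u -> is_derive u 1 D (dD u).
Proof.
move=> u0; have := is_derive1_ln u0; rewrite /D /ln_interp => ln_df.
apply: is_derive_eq; rewrite -![_ *: _]/(_ * _) /dD /slope; field.
by rewrite !gt_eqF.
Qed.

Let slope_anti {u v} : 0 < u -> u <= v -> slope v <= slope u.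
Proof.
move=> u0 uv; rewrite lerD2r lef_pV2 ?posrE ?mulr_gt0 // ?(lt_le_trans u0) //.
by rewrite ler_pM2l.
Qed.

Let slope_p_sign : 0 <= (q - p) * slope p.
Proof.
have [->|qp] := eqVneq q p; first by rewrite subrr mul0r.
have -> : (q - p) * slope p = 2 / (q - p) ^+ 2 * ((q - p) * (ln q - ln_taylor2 p q)).
  rewrite /slope /ln_interp_coef /ln_taylor2; field.
  by rewrite subr_eq0 qp gt_eqF.
by rewrite mulr_ge0 ?ln_sub_taylor2_sign // divr_ge0 ?sqr_ge0.
Qed.

(* As [slope] is decreasing, on each side of [p] the derivative [dD] of [D]
   changes sign at most once, so [D] is controlled by [D p = D q = 0]. *)
Lemma ln_le_interp t : p < q -> 0 < t -> t <= q -> ln t <= ln_interp p q t.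
Proof.
move=> pq t0 tq; rewrite -subr_ge0 -/(D t).
have slope_p : 0 <= slope p by move: slope_p_sign; rewrite pmulr_rge0 // subr_gt0.
have [tp|pt] := lerP t p.
  rewrite -D_p; apply: (@ler0_is_derive_ge D dD _ _ tp) => u /andP[tu up].
    by apply: D_df; exact: lt_le_trans tu.
  by rewrite mulr_le0_ge0 ?subr_le0 // (le_trans slope_p (slope_anti _ up))
    ?(lt_le_trans t0 tu).
have [slope_t|slope_t] := lerP 0 (slope t).
  rewrite -D_p; apply: (@ger0_is_derive_le D dD _ _ (ltW pt)) => u /andP[pu ut].
    by apply: D_df; exact: lt_le_trans pu.
  by rewrite mulr_ge0 ?subr_ge0 // (le_trans slope_t (slope_anti _ ut))
    ?(lt_le_trans p_gt0 pu).
rewrite -D_q; apply: (@ler0_is_derive_ge D dD _ _ tq) => u /andP[tu uq].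
  by apply: D_df; exact: lt_le_trans tu.
rewrite mulr_ge0_le0 ?subr_ge0 ?(le_trans (ltW pt) tu) //.
exact: le_trans (slope_anti t0 tu) (ltW slope_t).
Qed.

Lemma interp_le_ln t : q < p -> q <= t -> ln_interp p q t <= ln t.
Proof.
move=> qp qt; have t0 := lt_le_trans q_gt0 qt; rewrite -subr_le0 -/(D t).
have slope_p : slope p <= 0 by move: slope_p_sign; rewrite nmulr_rge0 // subr_lt0.
have [pt|tp] := lerP p t.
  rewrite -D_p; apply: (@ler0_is_derive_ge D dD _ _ pt) => u /andP[pu ut].
    by apply: D_df; exact: lt_le_trans pu.
  by rewrite mulr_ge0_le0 ?subr_ge0 // (le_trans (slope_anti p_gt0 pu) slope_p).
have [slope_t|slope_t] := lerP (slope t) 0.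
  rewrite -D_p; apply: (@ger0_is_derive_le D dD _ _ (ltW tp)) => u /andP[tu up].
    by apply: D_df; exact: lt_le_trans tu.
  by rewrite mulr_le0 ?subr_le0 // (le_trans (slope_anti t0 tu) slope_t).
rewrite -D_q; apply: (@ler0_is_derive_ge D dD _ _ qt) => u /andP[qu ut].
  by apply: D_df; exact: lt_le_trans qu.
rewrite mulr_le0_ge0 ?subr_le0 ?(le_trans ut (ltW tp)) //.
exact: le_trans (ltW slope_t) (slope_anti (lt_le_trans q_gt0 qu) ut).
Qed.

End LnInterpolationBounds.
End LnInterpolation.

Section Moments.
Variables (R : realType) (n : nat).
Hypothesis n_gt0 : (0 < n)%N.
Implicit Types x y : 'I_n -> R.

Let n_neq0 : n%:R != 0 :> R.
Proof. by rewrite pnatr_eq0 -lt0n. Qed.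

Let sum_const (z : R) : \sum_(i < n) z = n%:R * z.
Proof. by rewrite sumr_const card_ord mulr_natl. Qed.

Lemma sum_mean x : \sum_i x i = n%:R * mean x.
Proof. by rewrite /mean mulrC divfK. Qed.

Lemma mean_gt0 x : (forall i, 0 < x i) -> 0 < mean x.
Proof.
move=> x_gt0; rewrite /mean divr_gt0 ?ltr0n // (bigD1 (Ordinal n_gt0)) //=.
by rewrite ltr_wpDr ?sumr_ge0 // => i _; exact: ltW.
Qed.

Lemma variance_ge0 x : 0 <= variance x.
Proof. by rewrite divr_ge0 ?sumr_ge0 // => i _; exact: sqr_ge0. Qed.

Lemma stddev_ge0 x : 0 <= stddev x.
Proof. exact: sqrtr_ge0. Qed.

Lemma sqr_stddev x : stddev x ^+ 2 = variance x.
Proof. by rewrite /stddev sqr_sqrtr // variance_ge0. Qed.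

Lemma sum_sub_mean x : \sum_i (x i - mean x) = 0.
Proof. by rewrite sumrB sum_mean sum_const subrr. Qed.

Lemma sum_quadratic a b c d x :
  \sum_i (a + b * (x i - d) + c * (x i - d) ^+ 2) =
  n%:R * (a + b * (mean x - d) + c * (variance x + (mean x - d) ^+ 2)).
Proof.
set m := mean x; set e := m - d.
rewrite (eq_bigr (fun i => (a + b * e + c * e ^+ 2) + (b + 2 * c * e) * (x i - m)
    + c * (x i - m) ^+ 2)); last by move=> i _; rewrite /e; ring.
have sum_sqr : \sum_i (x i - m) ^+ 2 = n%:R * variance x.
  by rewrite /variance mulrC divfK.
by rewrite !big_split /= -!mulr_sumr sum_sub_mean sum_sqr !sum_const; ring.
Qed.

Lemma sum_sqr_mean x : \sum_i x i ^+ 2 = n%:R * (variance x + mean x ^+ 2).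
Proof.
have := sum_quadratic 0 0 1 0 x.
by rewrite (eq_bigr (fun i => x i ^+ 2)) => [->|i _]; rewrite subr0; ring.
Qed.

Lemma mean_stddevP x mu s : 0 <= s ->
  \sum_i x i = n%:R * mu -> \sum_i x i ^+ 2 = n%:R * (s ^+ 2 + mu ^+ 2) ->
  mean x = mu /\ stddev x = s.
Proof.
move=> s0 sum_x sum_x2.
have mu_x : mean x = mu by apply: (mulfI n_neq0); rewrite -sum_mean.
split=> //; move: sum_x2; rewrite sum_sqr_mean mu_x => /(mulfI n_neq0)/addIr var_x.
by rewrite /stddev var_x sqrtr_sqr ger0_norm.
Qed.

Lemma sqr_sub_mean_le x i : (1 < n)%N ->
  (x i - mean x) ^+ 2 <= n.-1%:R * variance x.
Proof.
move=> n_gt1; set m := mean x; set d := x i - m; set c := d / n.-1%:R.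
have n1_gt0 : 0 < n.-1%:R :> R by rewrite ltr0n ltn_predRL.
have nE : n%:R = n.-1%:R + 1 :> R by rewrite natr1 prednK.
have shifted_ge : (d + c) ^+ 2 <= \sum_j (x j - (m - c)) ^+ 2.
  rewrite (bigD1 i) //= (_ : x i - (m - c) = d + c); last by rewrite /d; ring.
  by rewrite lerDl sumr_ge0 // => j _; exact: sqr_ge0.
have shifted_sum : \sum_j (x j - (m - c)) ^+ 2 = n%:R * (variance x + c ^+ 2).
  have := sum_quadratic 0 0 1 (m - c) x.
  rewrite (eq_bigr (fun j => (x j - (m - c)) ^+ 2)) => [->|j _]; last by ring.
  by rewrite -/m; congr (_ * _); ring.
have : 0 <= n%:R / n.-1%:R * (n.-1%:R * variance x - d ^+ 2).
  have -> : n%:R / n.-1%:R * (n.-1%:R * variance x - d ^+ 2) =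
      n%:R * (variance x + c ^+ 2) - (d + c) ^+ 2.
    by rewrite /c nE; field; rewrite gt_eqF.
  by rewrite subr_ge0 -shifted_sum.
by rewrite pmulr_rge0 ?subr_ge0 // divr_gt0 // ltr0n.
Qed.

Lemma sum_sqr_lt_sqr_sum x : (1 < n)%N -> (forall i, 0 < x i) ->
  \sum_i x i ^+ 2 < (\sum_i x i) ^+ 2.
Proof.
move=> n_gt1 x_gt0; pose i0 := Ordinal n_gt0; pose i1 := Ordinal n_gt1.
have x_le_sum j : x j <= \sum_i x i.
  by rewrite (bigD1 j) //= lerDl sumr_ge0 // => i _; exact: ltW.
have x0_lt_sum : x i0 < \sum_i x i.
  rewrite (bigD1 i0) //= ltrDl (bigD1 i1) //= ltr_wpDr ?sumr_ge0 //.
  by move=> i _; exact: ltW.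
rewrite [X in _ < X]expr2 mulr_suml (bigD1 i0) // [X in _ < X](bigD1 i0) //=.
rewrite ltr_leD ?expr2 ?ltr_pM2l //.
by apply: ler_sum => i _; rewrite expr2 ler_pM2l.
Qed.

Lemma stddev_lt_sqrt_mean x : (1 < n)%N -> (forall i, 0 < x i) ->
  stddev x < Num.sqrt n.-1%:R * mean x.
Proof.
move=> n_gt1 x_gt0; have m_gt0 := mean_gt0 x_gt0.
have n1_gt0 : 0 < n.-1%:R :> R by rewrite ltr0n ltn_predRL.
have nE : n%:R = n.-1%:R + 1 :> R by rewrite natr1 prednK.
have var_lt : variance x < n.-1%:R * mean x ^+ 2.
  have := sum_sqr_lt_sqr_sum n_gt1 x_gt0.
  rewrite sum_sqr_mean sum_mean nE; nra.
rewrite -[mean x]ger0_norm ?ltW // -sqrtr_sqr -sqrtrM; last exact: ltW.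
by rewrite ltr_sqrt // mulr_gt0 ?exprn_gt0.
Qed.

Lemma prodx_gt0 x : (forall i, 0 < x i) -> 0 < prodx x.
Proof. by move=> x_gt0; apply: prodr_gt0 => i _. Qed.

Lemma ln_prodx x : (forall i, 0 < x i) -> ln (prodx x) = \sum_i ln (x i).
Proof.
move=> x_gt0; rewrite /prodx.
suff [] : 0 < \prod_i x i /\ ln (\prod_i x i) = \sum_i ln (x i) by [].
elim/big_rec2: _ => [|i a b _ [a_gt0 IH]]; first by rewrite ln1.
by rewrite mulr_gt0 // lnM ?posrE // IH.
Qed.

Lemma sum_ln_interp x y p q : mean x = mean y -> variance x = variance y ->
  (forall i, y i = p \/ y i = q) ->
  \sum_i ln_interp p q (x i) = \sum_i ln (y i).
Proof.
move=> mean_xy var_xy y_pq; rewrite /ln_interp sum_quadratic mean_xy var_xy.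
rewrite -sum_quadratic; apply: eq_bigr => i _.
by have [->|->] := y_pq i; [exact: ln_interp_left | exact: ln_interp_right].
Qed.

End Moments.

Section PointSequences.
Variables (R : realType) (n : nat).

Definition two_point (a b : R) : 'I_n.+1 -> R :=
  fun i => if val i == 0%N then a else b.

Definition three_point (a b c : R) : 'I_n.+2 -> R :=
  fun i => if val i == 0%N then a else if val i == 1%N then b else c.

Lemma sum_two_point (F : R -> R) a b :
  \sum_i F (two_point a b i) = F a + n%:R * F b.
Proof.
by rewrite big_ord_recl (eq_bigr (fun=> F b)) // sumr_const card_ord mulr_natl.
Qed.

Lemma prodx_two_point a b : prodx (two_point a b) = a * b ^+ n.
Proof.
by rewrite /prodx big_ord_recl (eq_bigr (fun=> b)) // prodr_const card_ord.
Qed.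

Lemma sum_three_point (F : R -> R) a b c :
  \sum_i F (three_point a b c i) = F a + F b + n%:R * F c.
Proof.
rewrite !big_ord_recl (eq_bigr (fun=> F c)) //.
by rewrite sumr_const card_ord mulr_natl addrA.
Qed.

Lemma prodx_three_point a b c : prodx (three_point a b c) = a * b * c ^+ n.
Proof.
by rewrite /prodx !big_ord_recl (eq_bigr (fun=> c)) // prodr_const card_ord mulrA.
Qed.

Lemma prodx_three_point_le (a b c B : R) : (0 < n)%N ->
  0 < a -> 0 < b -> 0 < c -> a + b + n%:R * c = B ->
  prodx (three_point a b c) <= a * B ^+ n.+1.
Proof.
move=> n_gt0 a_gt0 b_gt0 c_gt0 sum_abc.
have n_ge1 : 1 <= n%:R :> R by rewrite ler1n.
have b_le : b <= B by rewrite -sum_abc; nra.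
have c_le : c <= B by rewrite -sum_abc; nra.
have [b_ge0 c_ge0] := (ltW b_gt0, ltW c_gt0).
rewrite prodx_three_point exprS -mulrA ler_pM2l // ler_pM ?exprn_ge0 //.
by apply: lerXn2r; rewrite ?nnegrE // (le_trans c_ge0 c_le).
Qed.

End PointSequences.

Lemma exists_pos_sum_sqr (R : realType) (M S T : R) : 0 < M -> 0 < S ->
  S ^+ 2 <= (M + 1) * T -> T < S ^+ 2 ->
  exists u w, [/\ 0 < u, 0 < w, u + M * w = S & u ^+ 2 + M * w ^+ 2 = T].
Proof.
move=> M_gt0 S_gt0 ST TS; have M1_gt0 : 0 < M + 1 by rewrite addr_gt0.
have [M_neq0 M1_neq0] : M != 0 /\ M + 1 != 0 by rewrite !gt_eqF.
pose a := S / (M + 1).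
pose d := Num.sqrt (((M + 1) * T - S ^+ 2) / (M * (M + 1) ^+ 2)).
have sqr_d : d ^+ 2 = ((M + 1) * T - S ^+ 2) / (M * (M + 1) ^+ 2).
  by rewrite sqr_sqrtr // divr_ge0 ?subr_ge0 // mulr_ge0 ?sqr_ge0 ?ltW.
have d_lt_a : d < a.
  have sqr_a_sub_d : a ^+ 2 - d ^+ 2 = (S ^+ 2 - T) / (M * (M + 1)).
    by rewrite sqr_d /a; field; rewrite ?M_neq0 ?M1_neq0.
  rewrite -ltr_sqr ?nnegrE ?sqrtr_ge0 ?divr_ge0 ?ltW // -subr_gt0 sqr_a_sub_d.
  by rewrite divr_gt0 ?subr_gt0 ?mulr_gt0.
exists (a + M * d), (a - d); split.
- by rewrite ltr_wpDr ?mulr_ge0 ?sqrtr_ge0 ?divr_gt0 ?ltW.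
- by rewrite subr_gt0.
- by rewrite /a; field; rewrite ?M_neq0 ?M1_neq0.
- have -> : (a + M * d) ^+ 2 + M * (a - d) ^+ 2 =
      (M + 1) * a ^+ 2 + M * (M + 1) * d ^+ 2 by ring.
  by rewrite sqr_d /a; field; rewrite ?M_neq0 ?M1_neq0.
Qed.

Section ProductBounds.
Variables (R : realType) (k : nat).
Local Notation N := k.+2.
Let r : R := Num.sqrt N.-1%:R.
Implicit Types (x : 'I_N -> R) (mu s t : R).

Let N_gt0 : (0 < N)%N := isT.
Let N_gt1 : (1 < N)%N := isT.

Let r_gt0 : 0 < r. Proof. by rewrite sqrtr_gt0 ltr0n. Qed.
Let sqr_r : r ^+ 2 = N.-1%:R. Proof. by rewrite sqr_sqrtr ?ler0n. Qed.
Let natN : N%:R = r ^+ 2 + 1 :> R. Proof. by rewrite sqr_r natr1. Qed.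

Definition extremal mu t : 'I_N -> R := two_point (mu + t * r) (mu - t / r).

Lemma extremal_values mu t i :
  extremal mu t i = mu + t * r \/ extremal mu t i = mu - t / r.
Proof. by rewrite /extremal /two_point; case: ifP; [left|right]. Qed.

Lemma mean_stddev_extremal mu t :
  mean (extremal mu t) = mu /\ stddev (extremal mu t) = `|t|.
Proof.
have rN0 : r != 0 by rewrite gt_eqF.
apply: mean_stddevP => //.
  by rewrite /extremal (sum_two_point k.+1 id) /= -sqr_r natN; field.
rewrite /extremal (sum_two_point k.+1 (fun z => z ^+ 2)) /= -sqr_r natN.
by rewrite -normrX ger0_norm ?sqr_ge0 //; field.
Qed.

Lemma prodx_extremal mu s : prodx (extremal mu s) = upper_bd N mu s.
Proof. exact: prodx_two_point. Qed.

Lemma prodx_extremalN mu s : prodx (extremal mu (- s)) = lower_bd N mu s.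
Proof. by rewrite /extremal (prodx_two_point k.+1) !mulNr opprK. Qed.

Lemma extremal_gt0 mu t : 0 < mu + t * r -> 0 < mu - t / r ->
  forall i, 0 < extremal mu t i.
Proof. by move=> ? ? i; have [->|->] := extremal_values mu t i. Qed.

Lemma sub_mean_bounds x i : mean x - stddev x * r <= x i <= mean x + stddev x * r.
Proof.
have := sqr_sub_mean_le N_gt0 x i N_gt1.
rewrite -sqr_r -sqr_stddev -exprMn mulrC !expr2 => dev_le.
have sr_ge0 : 0 <= stddev x * r by rewrite mulr_ge0 ?stddev_ge0 ?ltW.
by apply/andP; split; nra.
Qed.

Lemma prodx_stddev0 x : stddev x = 0 -> prodx x = prodx (extremal (mean x) 0).
Proof.
move=> s0; apply: eq_bigr => i _; have := sub_mean_bounds x i.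
rewrite s0 mul0r subr0 addr0 -eq_le => /eqP <-.
by have [->|->] := extremal_values (mean x) 0 i; rewrite mul0r ?addr0 ?subr0.
Qed.

Lemma prodx_le_upper_bd x : (forall i, 0 < x i) -> 0 < mean x - stddev x / r ->
  prodx x <= upper_bd N (mean x) (stddev x).
Proof.
move=> x_gt0; set m := mean x; set s := stddev x => p_gt0.
have [s0|s_neq0] := eqVneq s 0.
  by rewrite prodx_stddev0 // -/m s0 prodx_extremal.
have s_gt0 : 0 < s by rewrite lt_def s_neq0 stddev_ge0.
set p := m - s / r; set q := m + s * r.
have pq : p < q.
  by rewrite /p /q ltrD2l -subr_gt0 opprK addr_gt0 ?divr_gt0 ?mulr_gt0.
have q_gt0 := lt_trans p_gt0 pq.
have y_gt0 := extremal_gt0 q_gt0 p_gt0.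
have [mean_y stddev_y] := mean_stddev_extremal m s.
rewrite -prodx_extremal -ler_ln ?posrE ?prodx_gt0 // !ln_prodx //.
apply: le_trans (_ : _ <= \sum_i ln_interp p q (x i)) _.
  apply: ler_sum => i _; have /andP[_ xi_le] := sub_mean_bounds x i.
  exact: ln_le_interp.
rewrite (sum_ln_interp N_gt0 (y := extremal m s)) ?mean_y // => [|i].
  by rewrite -!sqr_stddev stddev_y gtr0_norm.
by have [->|->] := extremal_values m s i; [right|left].
Qed.

Lemma lower_bd_le_prodx x : 0 < mean x - stddev x * r ->
  lower_bd N (mean x) (stddev x) <= prodx x.
Proof.
set m := mean x; set s := stddev x => p_gt0.
have x_gt0 i : 0 < x i by have /andP[+ _] := sub_mean_bounds x i; exact: lt_le_trans.
have [s0|s_neq0] := eqVneq s 0.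
  by rewrite prodx_stddev0 // -/m s0 -prodx_extremalN oppr0.
have s_gt0 : 0 < s by rewrite lt_def s_neq0 stddev_ge0.
set p := m - s * r; set q := m + s / r.
have pq : p < q.
  by rewrite /p /q ltrD2l -subr_gt0 opprK addr_gt0 ?divr_gt0 ?mulr_gt0.
have q_gt0 := lt_trans p_gt0 pq.
have y_gt0 : forall i, 0 < extremal m (- s) i.
  by apply: extremal_gt0; rewrite mulNr ?opprK.
have [mean_y stddev_y] := mean_stddev_extremal m (- s).
rewrite -prodx_extremalN -ler_ln ?posrE ?prodx_gt0 // !ln_prodx //.
rewrite -(sum_ln_interp N_gt0 (x := x) (p := q) (q := p)).
- apply: ler_sum => i _; have /andP[xi_ge _] := sub_mean_bounds x i.
  exact: interp_le_ln.
- by rewrite mean_y.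
- by rewrite -!sqr_stddev stddev_y normrN gtr0_norm.
- move=> i; have [->|->] := extremal_values m (- s) i.
    by rewrite mulNr; right.
  by rewrite mulNr opprK; left.
Qed.

Lemma exists_moments_prodx_le mu s (de : R) : (0 < k)%N -> 0 < mu -> mu <= s * r ->
  0 < de -> de <= mu ->
  4 * (N%:R * mu) * de <= (N%:R * mu) ^+ 2 - N%:R * (s ^+ 2 + mu ^+ 2) ->
  exists x, [/\ forall i, 0 < x i, mean x = mu, stddev x = s &
    prodx x <= de * (N%:R * mu) ^+ N.-1].
Proof.
move=> k_gt0 mu_gt0 mu_le de_gt0 de_le gap_ge.
set B := N%:R * mu; set A := N%:R * (s ^+ 2 + mu ^+ 2).
have s_ge0 : 0 <= s.
  by have : 0 < s * r := lt_le_trans mu_gt0 mu_le; rewrite pmulr_lgt0 // => /ltW.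
have B_gt0 : 0 < B by rewrite mulr_gt0 ?ltr0n.
have [u [w [u_gt0 w_gt0 sum_uw sqr_uw]]] : exists u w, [/\ 0 < u, 0 < w,
    u + k%:R * w = B - de & u ^+ 2 + k%:R * w ^+ 2 = A - de ^+ 2].
  apply: exists_pos_sum_sqr; first by rewrite ltr0n.
  - rewrite subr_gt0 (le_lt_trans de_le) // /B natN.
    by have := mulr_gt0 (exprn_gt0 2 r_gt0) mu_gt0; lra.
  - rewrite natr1 -sqr_r -subr_ge0.
    have -> : r ^+ 2 * (A - de ^+ 2) - (B - de) ^+ 2 =
        N%:R * ((s * r) ^+ 2 - mu ^+ 2) + N%:R * (de * (2 * mu - de)).
      by rewrite /A /B natN; ring.
    have sqr_mu_le : 0 <= (s * r) ^+ 2 - mu ^+ 2.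
      by rewrite subr_ge0 !expr2 ler_pM // ltW.
    have de_2mu : 0 <= de * (2 * mu - de) by apply: mulr_ge0; [exact: ltW | lra].
    by apply: addr_ge0; apply: mulr_ge0; rewrite ?ler0n.
  - rewrite -subr_gt0.
    have -> : (B - de) ^+ 2 - (A - de ^+ 2) =
        (B ^+ 2 - A - 4 * B * de) + 2 * (B * de) + 2 * de ^+ 2 by ring.
    have := mulr_gt0 B_gt0 de_gt0; have := sqr_ge0 de; move: gap_ge; rewrite -/B -/A.
    lra.
pose x := three_point (n := k) de u w.
have [mean_x stddev_x] : mean x = mu /\ stddev x = s.
  apply: (mean_stddevP N_gt0 s_ge0).
    by rewrite (sum_three_point k id) /= -addrA sum_uw addrC subrK.
  by rewrite (sum_three_point k (fun z => z ^+ 2)) /= -addrA sqr_uw addrC subrK.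
exists x; split => //.
- by move=> i; rewrite /x /three_point; case: ifP => _ //; case: ifP.
- by apply: prodx_three_point_le; rewrite // -addrA sum_uw addrC subrK.
Qed.

Lemma exists_pos_prodx_lt mu s eps : (0 < k)%N -> 0 < mu -> mu <= s * r ->
  s < r * mu -> 0 < eps ->
  exists x, [/\ forall i, 0 < x i, mean x = mu, stddev x = s & prodx x < eps].
Proof.
move=> k_gt0 mu_gt0 mu_le s_lt eps_gt0.
set B := N%:R * mu; set A := N%:R * (s ^+ 2 + mu ^+ 2).
have B_gt0 : 0 < B by rewrite mulr_gt0 ?ltr0n.
have s_ge0 : 0 <= s.
  by have : 0 < s * r := lt_le_trans mu_gt0 mu_le; rewrite pmulr_lgt0 // => /ltW.
have gap_gt0 : 0 < B ^+ 2 - A.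
  have -> : B ^+ 2 - A = N%:R * ((r * mu) ^+ 2 - s ^+ 2) by rewrite /A /B natN; ring.
  by rewrite mulr_gt0 ?ltr0n // subr_gt0 !expr2 ltr_pM.
pose de := Num.min mu (Num.min ((B ^+ 2 - A) / (4 * B)) (eps / (2 * B ^+ N.-1))).
have de_gt0 : 0 < de by rewrite !lt_min mu_gt0 !divr_gt0 ?mulr_gt0 ?exprn_gt0.
have de_le_mu : de <= mu by rewrite ge_min lexx.
have de_gap : 4 * B * de <= B ^+ 2 - A.
  by rewrite mulrC -ler_pdivlMr ?mulr_gt0 // !ge_min lexx orbT.
have de_eps : de * B ^+ N.-1 <= eps / 2.
  by rewrite -ler_pdivlMr ?exprn_gt0 // -mulrA -invfM !ge_min lexx !orbT.
have [x [x_gt0 mean_x stddev_x prod_le]] :=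
  exists_moments_prodx_le k_gt0 mu_gt0 mu_le de_gt0 de_le_mu de_gap.
exists x; split => //; apply: (le_lt_trans prod_le); apply: (le_lt_trans de_eps).
by rewrite ltr_pdivrMr // ltr_pMr // ltr1n.
Qed.

Lemma lower_bd_le0 mu s : 0 <= mu -> 0 <= s -> mu <= s * r -> lower_bd N mu s <= 0.
Proof.
move=> mu_ge0 s_ge0 mu_le; rewrite /lower_bd -/r mulr_le0_ge0 ?subr_le0 //.
by rewrite exprn_ge0 // addr_ge0 // divr_ge0 // ltW.
Qed.

Lemma lower_bd_lt0 mu s : 0 < mu -> 1 / r < s / mu -> lower_bd N mu s < 0.
Proof.
move=> mu_gt0; rewrite ltr_pdivlMr // mul1r mulrC ltr_pdivrMr // => mu_lt.
have s_gt0 : 0 < s by have := lt_trans mu_gt0 mu_lt; rewrite pmulr_lgt0.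
rewrite /lower_bd -/r pmulr_llt0 ?subr_lt0 //.
by rewrite exprn_gt0 // ltr_wpDr // divr_ge0 // ltW.
Qed.

Lemma lower_bd_le_prodx_pos x : (forall i, 0 < x i) ->
  lower_bd N (mean x) (stddev x) <= prodx x.
Proof.
move=> x_gt0; have [mu_le|mu_gt] := lerP (mean x) (stddev x * r).
  apply: le_trans (ltW (prodx_gt0 x_gt0)).
  exact: lower_bd_le0 (ltW (mean_gt0 N_gt0 x_gt0)) (stddev_ge0 x) mu_le.
by apply: lower_bd_le_prodx; rewrite subr_gt0.
Qed.

Lemma exists_pos_prodx_lt_max mu s eps : 0 < mu -> 0 <= s -> s / mu < r -> 0 < eps ->
  exists x, (forall i, 0 < x i) /\ mean x = mu /\ stddev x = s /\
    prodx x < Num.max 0 (lower_bd N mu s) + eps.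
Proof.
move=> mu_gt0 s_ge0; rewrite ltr_pdivrMr // => s_lt eps_gt0.
have [mu_le|mu_gt] := lerP mu (s * r).
  have k_gt0 : (0 < k)%N.
    (* for n = 2 the hypotheses [mu <= s * r] and [s < r * mu] clash as r = 1 *)
    case: (posnP k) => // k0; suff r1 : r = 1.
      by move: mu_le s_lt; rewrite r1 mulr1 mul1r => ? ?; lra.
    by rewrite /r k0 sqrtr1.
  have [x [x_gt0 mean_x stddev_x prod_lt]] :=
    exists_pos_prodx_lt k_gt0 mu_gt0 mu_le s_lt eps_gt0.
  exists x; do ![split=> //].
  by rewrite (lt_le_trans prod_lt) // lerDr le_max lexx.
have [mean_y stddev_y] := mean_stddev_extremal mu (- s).
exists (extremal mu (- s)); split; [|split=> //; split].
- apply: extremal_gt0; rewrite mulNr ?opprK; first by rewrite subr_gt0.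
  by rewrite ltr_wpDr // divr_ge0 // ltW.
- by rewrite stddev_y normrN ger0_norm.
- by rewrite prodx_extremalN ltr_pwDr // le_max lexx orbT.
Qed.

Lemma invr_le_sqrt : 1 / r <= r.
Proof. by rewrite ler_pdivrMr // -expr2 sqr_r ler1n. Qed.

Lemma prodx_bounds_small_ratio x : 0 < mean x -> stddev x / mean x < 1 / r ->
  (forall i, 0 < x i) /\ lower_bd N (mean x) (stddev x) <= prodx x /\
  prodx x <= upper_bd N (mean x) (stddev x).
Proof.
move=> m_gt0; rewrite ltr_pdivrMr // mul1r mulrC ltr_pdivlMr //.
rewrite -subr_gt0 => lower_gt0.
have x_gt0 i : 0 < x i by have /andP[+ _] := sub_mean_bounds x i; exact: lt_le_trans.
split=> //; split; first exact: lower_bd_le_prodx.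
apply: prodx_le_upper_bd => //.
have : stddev x / r <= stddev x * r.
  by rewrite ler_pdivrMr // -mulrA ler_peMr ?stddev_ge0 // -expr2 sqr_r ler1n.
by move: lower_gt0; lra.
Qed.

Lemma prodx_bounds_pos x : (forall i, 0 < x i) ->
  0 <= stddev x / mean x /\ stddev x / mean x < r /\
  lower_bd N (mean x) (stddev x) <= prodx x /\
  prodx x <= upper_bd N (mean x) (stddev x).
Proof.
move=> x_gt0; have m_gt0 := mean_gt0 N_gt0 x_gt0.
have s_lt := stddev_lt_sqrt_mean N_gt0 N_gt1 x_gt0.
split; first by rewrite divr_ge0 ?stddev_ge0 ?ltW.
split; first by rewrite ltr_pdivrMr.
split; first exact: lower_bd_le_prodx_pos.
by apply: prodx_le_upper_bd; rewrite // subr_gt0 ltr_pdivrMr // mulrC.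
Qed.

Lemma lower_bd_attained mu s : 0 <= s ->
  exists x, mean x = mu /\ stddev x = s /\ prodx x = lower_bd N mu s.
Proof.
move=> s_ge0; have [mean_y stddev_y] := mean_stddev_extremal mu (- s).
by exists (extremal mu (- s)); rewrite stddev_y normrN ger0_norm // prodx_extremalN.
Qed.

Lemma upper_bd_attained mu s : 0 < mu -> 0 <= s -> s / mu < r ->
  exists x, (forall i, 0 < x i) /\ mean x = mu /\ stddev x = s /\
    prodx x = upper_bd N mu s.
Proof.
move=> mu_gt0 s_ge0; rewrite ltr_pdivrMr // => s_lt.
have [mean_y stddev_y] := mean_stddev_extremal mu s.
exists (extremal mu s); split; last by rewrite stddev_y ger0_norm // prodx_extremal.
apply: extremal_gt0; first by rewrite ltr_wpDr // mulr_ge0 // ltW.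
by rewrite subr_gt0 ltr_pdivrMr // mulrC.
Qed.

End ProductBounds.

Theorem theorem1 (R : realType) (n : nat) (hn : (2 <= n)%N) :
  let r := Num.sqrt ((n.-1)%:R : R) in
  (* (a) bounds *)
  (forall x : 'I_n -> R,
      0 < mean x -> 0 <= stddev x / mean x -> stddev x / mean x < 1 / r ->
      (forall i, 0 < x i) /\
      lower_bd n (mean x) (stddev x) <= prodx x /\
      prodx x <= upper_bd n (mean x) (stddev x)) /\
  (* (a) sharpness *)
  (forall mu s : R, 0 < mu -> 0 <= s -> s / mu < 1 / r ->
      (exists x : 'I_n -> R,
          mean x = mu /\ stddev x = s /\ prodx x = lower_bd n mu s) /\
      (exists x : 'I_n -> R,
          mean x = mu /\ stddev x = s /\ prodx x = upper_bd n mu s)) /\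
  (* (b) positive sequences: range of sigma/mu and the two bounds *)
  (forall x : 'I_n -> R, (forall i, 0 < x i) -> 0 < mean x ->
      0 <= stddev x / mean x /\ stddev x / mean x < r /\
      lower_bd n (mean x) (stddev x) <= prodx x /\
      prodx x <= upper_bd n (mean x) (stddev x)) /\
  (* (b) the upper bound is attained by a positive sequence *)
  (forall mu s : R, 0 < mu -> 0 <= s -> s / mu < r ->
      exists x : 'I_n -> R, (forall i, 0 < x i) /\
          mean x = mu /\ stddev x = s /\ prodx x = upper_bd n mu s) /\
  (* (b) the lower bound expression is negative on 1/r < s/mu < r *)
  (forall mu s : R, 0 < mu -> 1 / r < s / mu -> s / mu < r ->
      lower_bd n mu s < 0) /\
  (* (b) max(0, lower bound) is the infimum of the product over positive
     sequences with mean mu and standard deviation s *)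
  (forall mu s : R, 0 < mu -> 0 <= s -> s / mu < r ->
      (forall x : 'I_n -> R, (forall i, 0 < x i) ->
          mean x = mu -> stddev x = s ->
          Num.max 0 (lower_bd n mu s) <= prodx x) /\
      (forall eps : R, 0 < eps ->
          exists x : 'I_n -> R, (forall i, 0 < x i) /\
              mean x = mu /\ stddev x = s /\
              prodx x < Num.max 0 (lower_bd n mu s) + eps)).
Proof.
case: n hn => [|[|k]] // _ r.
split; [|split; [|split; [|split; [|split]]]].
- by move=> x m_gt0 _; exact: prodx_bounds_small_ratio.
- move=> mu s mu_gt0 s_ge0 ratio_lt; split; first exact: lower_bd_attained.
  have ratio_lt_r := lt_le_trans ratio_lt (@invr_le_sqrt R k).
  by have [x [_ x_stats]] := upper_bd_attained mu_gt0 s_ge0 ratio_lt_r; exists x.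
- by move=> x x_gt0 _; exact: prodx_bounds_pos.
- by move=> mu s; exact: upper_bd_attained.
- by move=> mu s mu_gt0 ratio_gt _; exact: lower_bd_lt0.
move=> mu s mu_gt0 s_ge0 ratio_lt; split; last first.
  by move=> eps; exact: exists_pos_prodx_lt_max.
move=> x x_gt0 <- <-; have [_ [_ [lower_le _]]] := prodx_bounds_pos x_gt0.
by rewrite ge_max lower_le ltW ?prodx_gt0.
Qed.
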